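(* Let $\alpha_1, \alpha_2 \in \mathbb{R}$ be the two roots of an irreducible quadratic polynomial in $\mathbb{Q}[x]$ with $0 < \alpha_1 < 1 < \alpha_2$, and let $M' = \big\{ \sum_{i \in I} c_i (\alpha_1^i, \alpha_2^i) \mid c_i \in \mathbb{N}_0,\ I \subseteq \mathbb{Z},\ |I| < \infty \big\} \subseteq \mathbb{R}^2$. If $(v_1,v_2) \in M'$, then the set $M' \cap ([0,v_1] \times [0,v_2])$ is finite.
   Context: $M'$ is the image of $M_{\alpha_1} = \{f(\alpha_1) \mid f \in \mathbb{N}_0[x,x^{-1}]\}$ under the $\mathbb{Q}$-algebra embedding $\mathbb{Q}(\alpha_1) \to \mathbb{R}^2$, $x \mapsto (\sigma_1(x),\sigma_2(x))$, where $\sigma_i$ sends $\alpha_1 \mapsto \alpha_i$. *)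

From HB Require Import structures.
From mathcomp Require Import all_boot all_order all_algebra.
From mathcomp Require Import classical_sets cardinality reals.
Set Implicit Arguments. Unset Strict Implicit. Unset Printing Implicit Defensive.
Import Order.TTheory GRing.Theory Num.Theory.
Local Open Scope ring_scope.
Local Open Scope classical_set_scope.

(* M' = { sum_{i in I} c_i (a1^i, a2^i) | c_i in N_0, I a finite subset of Z }.
   The finite set I is given as a duplicate-free list of integers, and
   a1 ^ i is the integer power (exprz). *)
Definition Mprime (R : unitRingType) (a1 a2 : R) : set (R * R) :=
  [set z | exists (I : seq int) (c : int -> nat),
      uniq I /\
      z = (\sum_(i <- I) (c i)%:R * a1 ^ i, \sum_(i <- I) (c i)%:R * a2 ^ i)].

From HB Require Import structures.
From mathcomp Require Import all_boot all_order all_algebra.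
From mathcomp Require Import classical_sets cardinality reals.
From mathcomp Require Import lra.
Import Order.TTheory GRing.Theory Num.Theory.
Local Open Scope ring_scope.
Local Open Scope classical_set_scope.
Set Implicit Arguments. Unset Strict Implicit.

(* A point of M' in the box [0, v1] x [0, v2] dominates each of its summands
   coordinatewise.  A summand c (a1^i, a2^i) with c >= 1 and i >= 0 has
   c a2^i <= v2, which bounds both c and i since a2 > 1; for i < 0 the same
   holds with a1^-1 > 1 in the first coordinate.  So only finitely many
   exponents and coefficients can occur, and the points are finitely many
   bounded combinations of finitely many vectors. *)

Lemma bernoulli_le_exprn (R : realDomainType) (x : R) (n : nat) :
  1 <= x -> 1 + (x - 1) *+ n <= x ^+ n.
Proof.
move=> x_ge1; elim: n => [|n IHn]; first by rewrite mulr0n addr0 expr0.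
have x_ge0 : 0 <= x by rewrite (le_trans ler01).
have : x * (1 + (x - 1) *+ n) <= x * x ^+ n by rewrite ler_wpM2l.
have : 0 <= (x - 1) *+ n by rewrite mulrn_wge0 // subr_ge0.
rewrite exprS mulrS; nra.
Qed.

Lemma exprn_le_truncn (R : archiRealFieldType) (x v : R) (n : nat) :
  1 < x -> x ^+ n <= v -> (n <= Num.truncn (v / (x - 1)))%N.
Proof.
move=> x_gt1 xn_le; have x1_gt0 : 0 < x - 1 by rewrite subr_gt0.
have := bernoulli_le_exprn n (ltW x_gt1); rewrite -mulr_natr => bern.
have v_gt0 : 0 < v.
  by apply: lt_le_trans xn_le; rewrite exprn_gt0 // (lt_trans ltr01).
rewrite truncn_ge_nat; last by rewrite divr_ge0 // ltW.
by rewrite ler_pdivlMr // mulrC; lra.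
Qed.

Lemma natr_mul_exprn_le_truncn (R : archiRealFieldType) (x v : R) (c m : nat) :
  1 < x -> (0 < c)%N -> c%:R * x ^+ m <= v ->
  (c <= Num.truncn v)%N /\ (m <= Num.truncn (v / (x - 1)))%N.
Proof.
move=> x_gt1 c_gt0 cxm_le.
have c_ge1 : 1 <= c%:R :> R by rewrite ler1n.
have xm_ge1 : 1 <= x ^+ m by rewrite exprn_ege1 // ltW.
have c_le : c%:R <= v.
  by apply: le_trans cxm_le; rewrite ler_peMr // (le_trans ler01).
split; first by rewrite truncn_ge_nat // (le_trans _ c_le) // (le_trans ler01).
apply: exprn_le_truncn x_gt1 _; apply: le_trans cxm_le.
by rewrite ler_peMl // (le_trans ler01).
Qed.

Definition window (N : nat) : seq int :=
  [seq Posz n | n <- iota 0 N.+1] ++ [seq Negz n | n <- iota 0 N.+1].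

Lemma window_uniq N : uniq (window N).
Proof.
rewrite cat_uniq !map_inj_uniq ?iota_uniq ?andbT; try by move=> m n [].
by apply/hasPn => _ /mapP[n _ ->]; apply/mapP => -[].
Qed.

Lemma Posz_in_window N n : (Posz n \in window N) = (n <= N)%N.
Proof.
rewrite mem_cat mem_map; last by move=> ? ? [].
by rewrite mem_iota add0n ltnS; case: mapP => [[m _ //]|]; rewrite ?orbF.
Qed.

Lemma Negz_in_window N n : (Negz n \in window N) = (n <= N)%N.
Proof.
rewrite mem_cat [in X in _ || X]mem_map; last by move=> ? ? [].
by rewrite mem_iota add0n ltnS; case: mapP => [[m _ //]|].
Qed.

Definition bounded_combinations (R : unitRingType) (a1 a2 : R)
    (L : seq int) (K : nat) : set (R * R) :=
  [set z | exists h : int -> nat, {in L, forall i, (h i <= K)%N} /\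
      z = (\sum_(i <- L) (h i)%:R * a1 ^ i, \sum_(i <- L) (h i)%:R * a2 ^ i)].

Lemma finite_bounded_combinations (R : unitRingType) (a1 a2 : R) L K :
  finite_set (bounded_combinations a1 a2 L K).
Proof.
elim: L => [|j L IHL].
  apply: sub_finite_set (finite_set1 (0, 0)) => _ [h [_ ->]].
  by rewrite !big_nil.
have := finite_image2 (fun (k : nat) (w : R * R) =>
  (k%:R * a1 ^ j + w.1, k%:R * a2 ^ j + w.2)) (finite_II K.+1) IHL.
apply: sub_finite_set => _ [h [h_le ->]].
exists (h j); first exact/h_le/mem_head.
exists (\sum_(i <- L) (h i)%:R * a1 ^ i, \sum_(i <- L) (h i)%:R * a2 ^ i).
  by exists h; split => // i iL; apply: h_le; rewrite in_cons iL orbT.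
by rewrite !big_cons.
Qed.

Lemma big_seq_support (T : eqType) (V : nmodType) (I L : seq T) (F : T -> V) :
  uniq I -> uniq L -> {in I, forall i, i \notin L -> F i = 0} ->
  \sum_(i <- I) F i = \sum_(i <- L | i \in I) F i.
Proof.
move=> uI uL F0; rewrite (bigID (mem L)) /= [X in _ + X]big1_seq ?addr0.
  rewrite -[LHS]big_filter -[RHS]big_filter; apply/perm_big/uniq_perm.
  - exact: filter_uniq.
  - exact: filter_uniq.
  - by move=> i; rewrite !mem_filter andbC.
by move=> i /andP[iL iI]; exact: F0.
Qed.

Lemma sum_in_bounded_combinations (R : unitRingType) (a1 a2 : R)
    (I L : seq int) (c : int -> nat) (K : nat) :
  uniq I -> uniq L -> {in I, forall i, (0 < c i)%N -> i \in L /\ (c i <= K)%N} ->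
  bounded_combinations a1 a2 L K
    (\sum_(i <- I) (c i)%:R * a1 ^ i, \sum_(i <- I) (c i)%:R * a2 ^ i).
Proof.
move=> uI uL c_bnd; pose h i := if i \in I then c i else 0%N.
have sum_h (a : R) :
    \sum_(i <- I) (c i)%:R * a ^ i = \sum_(i <- L) (h i)%:R * a ^ i.
  rewrite (big_seq_support uI uL) => [|i iI iL]; last first.
    have [->|/(c_bnd i iI)[iL' _]] := posnP (c i).
      by rewrite mulr0n mul0r.
    by rewrite iL' in iL.
  rewrite (big_mkcond (mem I)); apply: eq_bigr => i _.
  by rewrite /h inE; case: ifP; rewrite ?mulr0n ?mul0r.
exists h; split=> [i _|]; last by rewrite !sum_h.
rewrite /h; case: ifP => // iI.
by case: (posnP (c i)) => [-> | /(c_bnd i iI)[]].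
Qed.

Lemma ler_sum_term (R : numDomainType) (T : eqType) (r : seq T) (F : T -> R) i :
  i \in r -> (forall j, 0 <= F j) -> F i <= \sum_(j <- r) F j.
Proof. by move=> ir F_ge0; rewrite (big_rem i) //= lerDl sumr_ge0. Qed.

Lemma summand_bounds (R : archiRealFieldType) (a1 a2 v1 v2 : R) :
  0 < a1 -> a1 < 1 -> 1 < a2 ->
  exists N K : nat, forall (i : int) (c : nat), (0 < c)%N ->
    c%:R * a1 ^ i <= v1 -> c%:R * a2 ^ i <= v2 -> i \in window N /\ (c <= K)%N.
Proof.
move=> a1_gt0 a1_lt1 a2_gt1; have a1V_gt1 : 1 < a1^-1 by rewrite invf_gt1.
exists (maxn (Num.truncn (v1 / (a1^-1 - 1))) (Num.truncn (v2 / (a2 - 1)))).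
exists (maxn (Num.truncn v1) (Num.truncn v2)).
move=> [n|n] c c_gt0 le1 le2.
- have [c_le n_le] := natr_mul_exprn_le_truncn a2_gt1 c_gt0 le2.
  by rewrite Posz_in_window !leq_max c_le n_le !orbT.
- move: le1; rewrite -[a1 ^ Negz n]/(a1 ^- n.+1) -exprVn => le1.
  have [c_le n_le] := natr_mul_exprn_le_truncn a1V_gt1 c_gt0 le1.
  by rewrite Negz_in_window !leq_max c_le (ltnW n_le).
Qed.

Theorem lemma4p6 (R : realType) (p : {poly rat}) (a1 a2 : R) :
  size p = 3%N -> irreducible_poly p ->
  root (map_poly ratr p) a1 -> root (map_poly ratr p) a2 -> a1 != a2 ->
  0 < a1 < 1 -> 1 < a2 ->
  forall v1 v2 : R, Mprime a1 a2 (v1, v2) ->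
  finite_set (Mprime a1 a2 `&` [set z | 0 <= z.1 <= v1 /\ 0 <= z.2 <= v2]).
Proof.
move=> _ _ _ _ _ /andP[a1_gt0 a1_lt1] a2_gt1 v1 v2 _.
have [N [K term_bounds]] := summand_bounds v1 v2 a1_gt0 a1_lt1 a2_gt1.
apply: sub_finite_set (finite_bounded_combinations a1 a2 (window N) K).
move=> _ [[I [c [uI ->]]]] /= [/andP[_ sum1_le] /andP[_ sum2_le]].
apply: sum_in_bounded_combinations (window_uniq N) _ => // i iI c_gt0.
have term_le_sum (a : R) : 0 < a ->
    (c i)%:R * a ^ i <= \sum_(j <- I) (c j)%:R * a ^ j.
  move=> a_gt0; apply: (ler_sum_term (F := fun j => (c j)%:R * a ^ j) iI) => j.
  by rewrite mulr_ge0 // exprz_ge0 // ltW.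
apply: term_bounds => //.
- exact: le_trans (term_le_sum _ a1_gt0) sum1_le.
- exact: le_trans (term_le_sum _ (lt_trans ltr01 a2_gt1)) sum2_le.
Qed.
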